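(* For all $i,j,k\in\{1,\dots,\ell\}$, $$[F_i,M_{jk}]=\delta_{ij}M_{j+1,k}K_i^{-2}-\delta_{ik}K_i^2M_{j,k-1}-\delta_{ij}\delta_{ik}\tfrac{K_i^2-K_i^{-2}}{q-q^{-1}},$$ $$[E_i,M_{jk}^*]=\delta_{ik}M_{j,k-1}^*K_i^2-\delta_{ij}K_i^{-2}M_{j+1,k}^*+\delta_{ij}\delta_{ik}\tfrac{K_i^2-K_i^{-2}}{q-q^{-1}},$$ where $M_{jk}:=0$ whenever $j>k$.
   Context: Fix $0<q<1$, $\ell\ge1$. In $U_q(\mathfrak{su}(\ell+1))$ (generators $K_i^{\pm1},E_i,F_i=E_i^*$, $K_i=K_i^*$, $1\le i\le\ell$, with $[K_i,K_j]=0$, $K_iE_iK_i^{-1}=qE_i$, $K_iE_jK_i^{-1}=q^{-1/2}E_j$ if $|i-j|=1$, $=E_j$ if $|i-j|>1$, $[E_i,F_j]=\delta_{ij}\frac{K_i^2-K_i^{-2}}{q-q^{-1}}$, $E_i^2E_j-(q+q^{-1})E_iE_jE_i+E_jE_i^2=0$ for $|i-j|=1$, $[E_i,E_j]=0$ for $|i-j|>1$, plus adjoints) set $[a,b]_q:=ab-q^{-1}ba$, $M_{ii}:=E_i$ and $M_{jk}:=[E_j,M_{j+1,k}]_q$ for $j<k$. *)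

From HB Require Import structures.
From mathcomp Require Import all_boot all_order all_algebra.
Set Implicit Arguments. Unset Strict Implicit. Unset Printing Implicit Defensive.
Import Order.TTheory GRing.Theory Num.Theory.
Local Open Scope ring_scope.

Definition qbr (R : fieldType) (A : lalgType R) (q : R) (a b : A) : A :=
  a * b - q^-1 *: (b * a).

Definition comm (A : pzRingType) (a b : A) : A := a * b - b * a.

(* Maux q E n k = M_{k-n,k}, where M_{kk} = E_k, M_{jk} = [E_j, M_{j+1,k}]_q *)
Fixpoint Maux (R : fieldType) (A : lalgType R) (q : R) (E : nat -> A)
    (n k : nat) : A :=
  match n with
  | 0 => E k
  | n'.+1 => qbr q (E (k - n'.+1)%N) (Maux q E n' k)
  end.

Definition Mq (R : fieldType) (A : lalgType R) (q : R) (E : nat -> A)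
    (j k : nat) : A :=
  if (j <= k)%N then Maux q E (k - j) k else 0.

(* [M_jk] is an iterated q-bracket of E_j, ..., E_k, and [F_i, -] is a
   derivation of the q-bracket, so [F_i, M_jk] only sees the factors where F_i
   meets E_i. There [F_i, E_i] is minus the Cartan element
   (K_i^2 - K_i^-2)/(q - q^-1), and its q-bracket with the neighbouring part of
   the chain collapses to a single term because K_i^{+-2} q-commutes with that
   part by the factor q^{-+1}. For j < i < k the term M_{i+1,k} K_i^-2
   produced at E_i is killed by the bracket with E_{i-1}, because
   E_{i-1} K_i^-2 = q^-1 K_i^-2 E_{i-1}.
   The second identity is the image of the first under the anti-involution *. *)

From mathcomp Require Import all_boot all_order all_algebra.
From mathcomp Require Import zify.
Import Order.TTheory GRing.Theory Num.Theory.
Set Implicit Arguments. Unset Strict Implicit. Unset Printing Implicit Defensive.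
Local Open Scope ring_scope.

Section Commutators.

Variables (R : fieldType) (A : algType R).
Implicit Types (a b x y : A) (c q : R).

Lemma commC a b : comm a b = - comm b a.
Proof. by rewrite /comm opprB. Qed.

Lemma comm0r x : comm x 0 = 0.
Proof. by rewrite /comm mulr0 mul0r subrr. Qed.

Lemma commMr x a b : comm x (a * b) = comm x a * b + a * comm x b.
Proof. by rewrite /comm mulrBl mulrBr !mulrA addrA subrK. Qed.

Lemma commBr x a b : comm x (a - b) = comm x a - comm x b.
Proof. by rewrite /comm mulrBl mulrBr [in LHS]opprD addrACA -opprD. Qed.

Lemma commZr c x a : comm x (c *: a) = c *: comm x a.
Proof. by rewrite /comm scalerBr -scalerAl -scalerAr. Qed.

Lemma comm_qbr q x a b :
  comm x (qbr q a b) = qbr q (comm x a) b + qbr q a (comm x b).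
Proof.
rewrite /qbr commBr commZr !commMr [comm x b * a + _]addrC.
by rewrite scalerDr opprD addrACA.
Qed.

Lemma qbr0l q x : qbr q 0 x = 0.
Proof. by rewrite /qbr mulr0 mul0r scaler0 subrr. Qed.

Lemma qbr0r q x : qbr q x 0 = 0.
Proof. by rewrite /qbr mulr0 mul0r scaler0 subrr. Qed.

Lemma qbrBl q a b x : qbr q (a - b) x = qbr q a x - qbr q b x.
Proof. by rewrite /qbr mulrBl mulrBr scalerBr [in LHS]opprD addrACA -opprD. Qed.

Lemma qbrBr q x a b : qbr q x (a - b) = qbr q x a - qbr q x b.
Proof. by rewrite /qbr mulrBl mulrBr scalerBr [in LHS]opprD addrACA -opprD. Qed.

Lemma qbrZl q c a x : qbr q (c *: a) x = c *: qbr q a x.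
Proof. by rewrite /qbr -scalerAl -scalerAr scalerBr !scalerA mulrC. Qed.

Lemma qbrZr q c x a : qbr q x (c *: a) = c *: qbr q x a.
Proof. by rewrite /qbr -scalerAl -scalerAr scalerBr !scalerA mulrC. Qed.

Lemma qbrNl q a x : qbr q (- a) x = - qbr q a x.
Proof. by rewrite -scaleN1r qbrZl scaleN1r. Qed.

Lemma qbrNr q x a : qbr q x (- a) = - qbr q x a.
Proof. by rewrite -scaleN1r qbrZr scaleN1r. Qed.

Lemma qbr_mulr_comm q x m y : comm m x = 0 -> qbr q x (m * y) = m * qbr q x y.
Proof.
move=> /eqP; rewrite subr_eq0 => /eqP mx.
by rewrite /qbr mulrBr -[m * (_ *: _)]scalerAr !mulrA -mx.
Qed.

Definition qcommute (k x : A) (c : R) := k * x = c *: (x * k).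

Lemma qcommute1 k x : qcommute k x 1 <-> comm k x = 0.
Proof.
rewrite /qcommute /comm scale1r; split=> [-> | /eqP]; first by rewrite subrr.
by rewrite subr_eq0 => /eqP.
Qed.

Lemma qcommuteMl k k' x c c' :
  qcommute k x c -> qcommute k' x c' -> qcommute (k * k') x (c * c').
Proof.
rewrite /qcommute => kx k'x.
rewrite -mulrA k'x -scalerAr [k * (x * _)]mulrA kx -scalerAl scalerA.
by rewrite [c * c']mulrC mulrA.
Qed.

Lemma qcommuteXl k x c n : qcommute k x c -> qcommute (k ^+ n) x (c ^+ n).
Proof.
move=> kx; elim: n => [|n IHn]; first by rewrite /qcommute !expr0 mulr1 mul1r scale1r.
by rewrite !exprS; apply: qcommuteMl.
Qed.

Lemma qcommuteMr k x y c d :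
  qcommute k x c -> qcommute k y d -> qcommute k (x * y) (c * d).
Proof.
rewrite /qcommute => kx ky.
by rewrite mulrA kx -scalerAl -[x * k * y]mulrA ky -scalerAr scalerA mulrA.
Qed.

Lemma qcommute_qbr q k x y c d :
  qcommute k x c -> qcommute k y d -> qcommute k (qbr q x y) (c * d).
Proof.
move=> kx ky; move: (qcommuteMr kx ky) (qcommuteMr ky kx).
rewrite /qcommute /qbr => kxy kyx.
rewrite mulrBr -scalerAr kxy kyx [d * c]mulrC mulrBl -scalerAl scalerBr.
by rewrite !scalerA [q^-1 * _]mulrC.
Qed.

Lemma qbr_qcommute_l q k x c : qcommute k x c -> qbr q k x = (c - q^-1) *: (x * k).
Proof. by rewrite /qbr => ->; rewrite scalerBl. Qed.

Lemma qbr_qcommute_r q k x c :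
  c != 0 -> qcommute k x c -> qbr q x k = (c^-1 - q^-1) *: (k * x).
Proof. by move=> c0 kx; rewrite /qbr kx !scalerA mulrBl mulVf // scalerBl scale1r. Qed.

End Commutators.

Section UnitCommutators.

Variables (R : fieldType) (A : unitAlgType R).
Implicit Types (k x : A) (c q : R).

Lemma qcommute_conj k x c :
  k \is a GRing.unit -> k * x * k^-1 = c *: x -> qcommute k x c.
Proof. by move=> ku kxk; rewrite /qcommute -[k * x](divrK ku) kxk scalerAl. Qed.

Lemma qcommuteVl k x c :
  k \is a GRing.unit -> c != 0 -> qcommute k x c -> qcommute k^-1 x c^-1.
Proof.
rewrite /qcommute => ku c0 kx.
have xk : x * k^-1 = c *: (k^-1 * x).
  have := congr1 (fun z => k^-1 * z * k^-1) kx => /=.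
  by rewrite mulKr // -scalerAr -scalerAl !mulrA mulrK.
by rewrite xk scalerA mulVf // scale1r.
Qed.

Lemma qcommute_expN2 q k x : q != 0 -> k \is a GRing.unit ->
  qcommute (k ^+ 2) x q^-1 -> qcommute (k ^- 2) x q.
Proof.
by move=> q0 ku kx; rewrite -[q]invrK; apply: qcommuteVl; rewrite ?unitrX ?invr_eq0.
Qed.

Lemma qbr_expN2_eq0 q k x : q != 0 -> k \is a GRing.unit ->
  qcommute (k ^+ 2) x q^-1 -> qbr q x (k ^- 2) = 0.
Proof.
move=> q0 ku kx.
by rewrite (qbr_qcommute_r _ q0 (qcommute_expN2 q0 ku kx)) subrr scale0r.
Qed.

Lemma qbr_cartan_l q k x : q - q^-1 != 0 -> k \is a GRing.unit ->
  qcommute (k ^+ 2) x q^-1 ->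
  qbr q ((q - q^-1)^-1 *: (k ^+ 2 - k ^- 2)) x = - (x * k ^- 2).
Proof.
move=> dq ku kx.
have q0 : q != 0 by apply: contraNneq dq => ->; rewrite invr0 subr0.
rewrite qbrZl qbrBl (qbr_qcommute_l _ kx) (qbr_qcommute_l _ (qcommute_expN2 q0 ku kx)).
by rewrite subrr scale0r sub0r scalerN scalerA mulVf // scale1r.
Qed.

Lemma qbr_cartan_r q k x : q - q^-1 != 0 -> k \is a GRing.unit ->
  qcommute (k ^+ 2) x q^-1 ->
  qbr q x ((q - q^-1)^-1 *: (k ^+ 2 - k ^- 2)) = k ^+ 2 * x.
Proof.
move=> dq ku kx.
have q0 : q != 0 by apply: contraNneq dq => ->; rewrite invr0 subr0.
rewrite qbrZr qbrBr qbr_expN2_eq0 // (qbr_qcommute_r _ _ kx) ?invr_eq0 //.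
by rewrite invrK subr0 scalerA mulVf // scale1r.
Qed.

End UnitCommutators.

Lemma ltn_ind_down (P : nat -> Prop) i :
  P i -> (forall j, (j < i)%N -> P j.+1 -> P j) -> forall j, (j <= i)%N -> P j.
Proof.
move=> Pi IH j ji; move Hd : (i - j)%N => d.
elim: d j ji Hd => [|d IHd] j ji Hd; first by have -> : j = i by lia.
by apply: IH; [lia | apply: IHd; lia].
Qed.

Section QBracketChain.

Variables (R : fieldType) (A : algType R) (q : R) (E : nat -> A).

Lemma Mq_gt j k : (k < j)%N -> Mq q E j k = 0.
Proof. by move=> kj; rewrite /Mq leqNgt kj. Qed.

Lemma Mqii k : Mq q E k k = E k.
Proof. by rewrite /Mq leqnn subnn. Qed.

Lemma Mq_qbr j k : (j < k)%N -> Mq q E j k = qbr q (E j) (Mq q E j.+1 k).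
Proof.
move=> jk; rewrite /Mq ltnW // jk.
have -> : (k - j = (k - j.+1).+1)%N by lia.
by congr (qbr q (E _) _); lia.
Qed.

Lemma comm_Mq0 x j k :
  (forall p, (j <= p <= k)%N -> comm x (E p) = 0) -> comm x (Mq q E j k) = 0.
Proof.
have [kj _ | jk] := ltnP k j; first by rewrite Mq_gt ?comm0r.
move: j jk; apply: ltn_ind_down => [|j jk IH] xE.
  by rewrite Mqii xE ?leqnn.
rewrite Mq_qbr // comm_qbr xE; last lia.
rewrite IH ?qbr0l ?qbr0r ?addr0 // => p hp; apply: xE; lia.
Qed.

End QBracketChain.

Section UqGenerators.

Variables (R : rcfType) (A : unitAlgType R) (q : R) (l : nat) (K E F : nat -> A).
Hypothesis q_gt0 : 0 < q.
Hypothesis q_lt1 : q < 1.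
Hypothesis K_unit : forall i, (1 <= i <= l)%N -> K i \is a GRing.unit.
Hypothesis K_E_adj : forall i j, (1 <= i <= l)%N -> (1 <= j <= l)%N ->
  (i == j.+1) || (j == i.+1) -> K i * E j * (K i)^-1 = (Num.sqrt q)^-1 *: E j.
Hypothesis K_E_far : forall i j, (1 <= i <= l)%N -> (1 <= j <= l)%N ->
  (i.+1 < j)%N || (j.+1 < i)%N -> K i * E j * (K i)^-1 = E j.
Hypothesis E_F_diag : forall i, (1 <= i <= l)%N ->
  E i * F i - F i * E i = (q - q^-1)^-1 *: (K i ^+ 2 - K i ^- 2).
Hypothesis E_F_off : forall i j, (1 <= i <= l)%N -> (1 <= j <= l)%N -> i != j ->
  E i * F j - F j * E i = 0.
Hypothesis E_E_far : forall i j, (1 <= i <= l)%N -> (1 <= j <= l)%N ->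
  (i.+1 < j)%N || (j.+1 < i)%N -> E i * E j = E j * E i.

Local Notation M := (Mq q E).

Lemma q_subV_neq0 : q - q^-1 != 0.
Proof. by rewrite subr_eq0 lt_eqF // (lt_trans q_lt1) // invf_gt1. Qed.

Lemma qcommute_K_E_adj i j : (1 <= i <= l)%N -> (1 <= j <= l)%N ->
  (i == j.+1) || (j == i.+1) -> qcommute (K i) (E j) (Num.sqrt q)^-1.
Proof. by move=> hi hj ij; apply: qcommute_conj; [exact: K_unit | exact: K_E_adj]. Qed.

Lemma qcommute_K_E_far i j : (1 <= i <= l)%N -> (1 <= j <= l)%N ->
  (i.+1 < j)%N || (j.+1 < i)%N -> qcommute (K i) (E j) 1.
Proof.
move=> hi hj ij; apply: qcommute_conj; rewrite ?scale1r.
  exact: K_unit.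
exact: K_E_far.
Qed.

Lemma qcommute_K2_adj i x :
  qcommute (K i) x (Num.sqrt q)^-1 -> qcommute (K i ^+ 2) x q^-1.
Proof. by move=> /(qcommuteXl 2); rewrite exprVn sqr_sqrtr // ltW. Qed.

Lemma comm_K2_E_far i j : (1 <= i <= l)%N -> (1 <= j <= l)%N ->
  (i.+1 < j)%N || (j.+1 < i)%N -> comm (K i ^+ 2) (E j) = 0.
Proof.
move=> hi hj ij; apply/qcommute1; rewrite -(expr1n R 2).
exact/qcommuteXl/qcommute_K_E_far.
Qed.

Lemma comm_F_E i j : (1 <= i <= l)%N -> (1 <= j <= l)%N -> i != j ->
  comm (F i) (E j) = 0.
Proof. by move=> hi hj ij; rewrite commC /comm E_F_off 1?eq_sym ?oppr0. Qed.

Lemma comm_F_E_diag i : (1 <= i <= l)%N ->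
  comm (F i) (E i) = - ((q - q^-1)^-1 *: (K i ^+ 2 - K i ^- 2)).
Proof. by move=> hi; rewrite commC /comm E_F_diag. Qed.

Lemma comm_F_Mq_out i j k : (1 <= i <= l)%N -> (1 <= j)%N -> (k <= l)%N ->
  (i < j)%N || (k < i)%N -> comm (F i) (M j k) = 0.
Proof. by move=> hi hj hk ijk; apply: comm_Mq0 => p hp; apply: comm_F_E; lia. Qed.

Lemma qcommute_K2_Mq_next j k : (1 <= j)%N -> (j < k <= l)%N ->
  qcommute (K j ^+ 2) (M j.+1 k) q^-1.
Proof.
move=> hj /andP[jk kl]; apply: qcommute_K2_adj.
have [jk1 | /eqP jk1] := ltnP j.+1 k; last first.
  have -> : k = j.+1 by lia.
  by rewrite Mqii; apply: qcommute_K_E_adj; rewrite ?eqxx ?orbT; lia.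
rewrite Mq_qbr // -[_^-1]mulr1; apply: qcommute_qbr.
  by apply: qcommute_K_E_adj; rewrite ?eqxx ?orbT; lia.
by apply/qcommute1/comm_Mq0 => p hp; apply/qcommute1/qcommute_K_E_far; lia.
Qed.

Lemma comm_F_Mq_first j k : (1 <= j)%N -> (j < k <= l)%N ->
  comm (F j) (M j k) = M j.+1 k * K j ^- 2.
Proof.
move=> hj /andP[jk kl]; rewrite Mq_qbr // comm_qbr comm_F_Mq_out; try lia.
rewrite qbr0r addr0 comm_F_E_diag; last lia.
rewrite qbrNl qbr_cartan_l ?opprK ?q_subV_neq0 //.
  by apply: K_unit; lia.
by apply: qcommute_K2_Mq_next; lia.
Qed.

Lemma comm_F_Mq_last j k : (1 <= j)%N -> (j < k <= l)%N ->
  comm (F k) (M j k) = - (K k ^+ 2 * M j k.-1).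
Proof.
move=> hj /andP[jk kl]; have jk1 : (j <= k.-1)%N by lia.
move: j jk1 hj {jk}; apply: ltn_ind_down => [|j jk IH] hj.
  rewrite Mq_qbr ?prednK ?Mqii; try lia.
  rewrite comm_qbr (comm_F_E (i:=k) (j:=k.-1)) ?qbr0l ?add0r; try lia.
  rewrite comm_F_E_diag ?qbrNr ?qbr_cartan_r ?q_subV_neq0 //; last lia.
    by apply: K_unit; lia.
  by apply: qcommute_K2_adj; apply: qcommute_K_E_adj; rewrite ?prednK ?eqxx //; lia.
rewrite Mq_qbr ?comm_qbr ?(comm_F_E (i:=k) (j:=j)) ?qbr0l ?add0r ?IH; try lia.
rewrite qbrNr qbr_mulr_comm -?Mq_qbr //; try lia.
by apply: comm_K2_E_far; lia.
Qed.

Lemma comm_F_Mq_inner i j k : (1 <= j)%N -> (j < i < k)%N -> (k <= l)%N ->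
  comm (F i) (M j k) = 0.
Proof.
move=> hj /andP[ji ik] kl; have ji1 : (j <= i.-1)%N by lia.
move: j ji1 hj {ji}; apply: ltn_ind_down => [|j ji IH] hj.
  rewrite Mq_qbr ?prednK ?comm_qbr ?(comm_F_E (i:=i) (j:=i.-1)); try lia.
  rewrite qbr0l add0r.
  rewrite comm_F_Mq_first; try lia.
  rewrite qbr_mulr_comm ?qbr_expN2_eq0 ?mulr0 ?gt_eqF //.
  - by apply: K_unit; lia.
  - apply: qcommute_K2_adj; apply: qcommute_K_E_adj; rewrite ?prednK ?eqxx ?orbT //; lia.
  - rewrite commC comm_Mq0 ?oppr0 // => p hp.
    by rewrite /comm E_E_far ?subrr //; lia.
rewrite Mq_qbr ?comm_qbr ?(comm_F_E (i:=i) (j:=j)) ?qbr0l ?add0r ?IH ?qbr0r //.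
all: lia.
Qed.

Lemma comm_F_Mq i j k :
  (1 <= i <= l)%N -> (1 <= j <= l)%N -> (1 <= k <= l)%N ->
  comm (F i) (M j k) =
    (i == j)%:R *: (M j.+1 k * K i ^- 2)
    - (i == k)%:R *: (K i ^+ 2 * M j k.-1)
    - ((i == j) && (i == k))%:R *: ((q - q^-1)^-1 *: (K i ^+ 2 - K i ^- 2)).
Proof.
move=> hi hj hk; have [jk | kj | <-] := ltngtP j k.
- have [ij | ji | ->] := ltngtP i j; rewrite /=.
  + rewrite (ltn_eqF (ltn_trans ij jk)) !scale0r !subr0.
    by rewrite comm_F_Mq_out ?ij //; lia.
  + rewrite !scale0r sub0r subr0.
    have [ik | ki | ->] := ltngtP i k; rewrite ?scale0r ?oppr0.
    * by rewrite comm_F_Mq_inner ?ji //; lia.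
    * by rewrite comm_F_Mq_out ?ki ?orbT //; lia.
    * by rewrite scale1r comm_F_Mq_last ?jk //; lia.
  + by rewrite (ltn_eqF jk) !scale0r !subr0 scale1r comm_F_Mq_first ?jk //; lia.
- rewrite !Mq_gt ?comm0r ?mul0r ?mulr0 ?scaler0 ?subr0 //; try lia.
  by case: eqP => [->|_]; rewrite ?(gtn_eqF kj) ?andbF ?scale0r ?subr0.
- rewrite [M j.+1 j]Mq_gt // [M j j.-1]Mq_gt; last lia.
  rewrite Mqii ?mul0r ?mulr0 ?scaler0 ?subr0 ?sub0r.
  have [->|ij] := eqVneq i j; first by rewrite comm_F_E_diag // scale1r.
  by rewrite comm_F_E // scale0r oppr0.
Qed.

End UqGenerators.

Section AntiInvolution.

Variables (R : fieldType) (A : unitAlgType R) (star : A -> A).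
Hypothesis starD : forall a b, star (a + b) = star a + star b.
Hypothesis starM : forall a b, star (a * b) = star b * star a.
Hypothesis starZ : forall (c : R) a, star (c *: a) = c *: star a.
Hypothesis star1 : star 1 = 1.

Lemma starN a : star (- a) = - star a.
Proof. by rewrite -scaleN1r starZ scaleN1r. Qed.

Lemma starB a b : star (a - b) = star a - star b.
Proof. by rewrite starD starN. Qed.

Lemma star_comm a b : star (comm a b) = comm (star b) (star a).
Proof. by rewrite /comm starB !starM. Qed.

Lemma starX a n : star (a ^+ n) = star a ^+ n.
Proof.
elim: n => [|n IHn]; first by rewrite !expr0 star1.
by rewrite exprS starM IHn exprSr.
Qed.

Lemma starV k : k \is a GRing.unit -> star k^-1 = (star k)^-1.
Proof.
move=> ku; have sku : star k \is a GRing.unit.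
  by apply/unitrP; exists (star k^-1); rewrite -!starM mulrV ?mulVr ?star1.
by rewrite -[star k^-1](mulrK sku) -starM mulrV // star1 mul1r.
Qed.

End AntiInvolution.

Theorem lemma3p1 (R : rcfType) (A : unitAlgType R) (q : R) (l : nat)
  (star : A -> A) (K E F : nat -> A) :
  0 < q -> q < 1 -> (1 <= l)%N ->
  (forall a b, star (a + b) = star a + star b) ->
  (forall a b, star (a * b) = star b * star a) ->
  (forall (c : R) a, star (c *: a) = c *: star a) ->
  (forall a, star (star a) = a) ->
  star 1 = 1 ->
  (forall i, (1 <= i <= l)%N -> K i \is a GRing.unit) ->
  (forall i, (1 <= i <= l)%N -> star (K i) = K i) ->
  (forall i, (1 <= i <= l)%N -> F i = star (E i)) ->
  (forall i j, (1 <= i <= l)%N -> (1 <= j <= l)%N -> K i * K j = K j * K i) ->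
  (forall i, (1 <= i <= l)%N -> K i * E i * (K i)^-1 = q *: E i) ->
  (forall i j, (1 <= i <= l)%N -> (1 <= j <= l)%N ->
     (i == j.+1) || (j == i.+1) ->
     K i * E j * (K i)^-1 = (Num.sqrt q)^-1 *: E j) ->
  (forall i j, (1 <= i <= l)%N -> (1 <= j <= l)%N ->
     (i.+1 < j)%N || (j.+1 < i)%N -> K i * E j * (K i)^-1 = E j) ->
  (forall i, (1 <= i <= l)%N -> K i * F i * (K i)^-1 = q^-1 *: F i) ->
  (forall i j, (1 <= i <= l)%N -> (1 <= j <= l)%N ->
     (i == j.+1) || (j == i.+1) ->
     K i * F j * (K i)^-1 = Num.sqrt q *: F j) ->
  (forall i j, (1 <= i <= l)%N -> (1 <= j <= l)%N ->
     (i.+1 < j)%N || (j.+1 < i)%N -> K i * F j * (K i)^-1 = F j) ->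
  (forall i, (1 <= i <= l)%N ->
     E i * F i - F i * E i = (q - q^-1)^-1 *: (K i ^+ 2 - K i ^- 2)) ->
  (forall i j, (1 <= i <= l)%N -> (1 <= j <= l)%N -> i != j ->
     E i * F j - F j * E i = 0) ->
  (forall i j, (1 <= i <= l)%N -> (1 <= j <= l)%N ->
     (i == j.+1) || (j == i.+1) ->
     E i ^+ 2 * E j - (q + q^-1) *: (E i * E j * E i) + E j * E i ^+ 2 = 0) ->
  (forall i j, (1 <= i <= l)%N -> (1 <= j <= l)%N ->
     (i == j.+1) || (j == i.+1) ->
     F i ^+ 2 * F j - (q + q^-1) *: (F i * F j * F i) + F j * F i ^+ 2 = 0) ->
  (forall i j, (1 <= i <= l)%N -> (1 <= j <= l)%N ->
     (i.+1 < j)%N || (j.+1 < i)%N -> E i * E j = E j * E i) ->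
  (forall i j, (1 <= i <= l)%N -> (1 <= j <= l)%N ->
     (i.+1 < j)%N || (j.+1 < i)%N -> F i * F j = F j * F i) ->
  forall i j k, (1 <= i <= l)%N -> (1 <= j <= l)%N -> (1 <= k <= l)%N ->
    comm (F i) (Mq q E j k) =
      (i == j)%:R *: (Mq q E j.+1 k * K i ^- 2)
      - (i == k)%:R *: (K i ^+ 2 * Mq q E j k.-1)
      - ((i == j) && (i == k))%:R *: ((q - q^-1)^-1 *: (K i ^+ 2 - K i ^- 2))
    /\
    comm (E i) (star (Mq q E j k)) =
      (i == k)%:R *: (star (Mq q E j k.-1) * K i ^+ 2)
      - (i == j)%:R *: (K i ^- 2 * star (Mq q E j.+1 k))
      + ((i == j) && (i == k))%:R *: ((q - q^-1)^-1 *: (K i ^+ 2 - K i ^- 2)).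
Proof.
move=> q_gt0 q_lt1 _ starD starM starZ starK star1 K_unit K_star F_star _ _
  K_E_adj K_E_far _ _ _ E_F_diag E_F_off _ _ E_E_far _ i j k hi hj hk.
have commFM := comm_F_Mq q_gt0 q_lt1 K_unit K_E_adj K_E_far E_F_diag E_F_off
  E_E_far hi hj hk.
split; first exact: commFM.
have K2_star : star (K i ^+ 2) = K i ^+ 2 by rewrite (starX starM star1) K_star.
have K2V_star : star (K i ^- 2) = K i ^- 2.
  by rewrite (starV starM star1) ?K2_star // unitrX // K_unit.
have -> : comm (E i) (star (Mq q E j k)) = - star (comm (F i) (Mq q E j k)).
  by rewrite (star_comm starD starM starZ) F_star // starK -commC.
rewrite commFM !(starB starD starZ) !starZ (starB starD starZ).
rewrite (starM (Mq q E j.+1 k)) starM.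
by rewrite K2_star K2V_star !opprB addrC.
Qed.
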